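(* Let $k>500$, $\ln^3k/\sqrt k<\delta<1/100$, $d=300\lceil\ln k\rceil$, $\varepsilon=50\delta/\lceil\ln k\rceil$, and let $c^1,\dots,c^k$ be sampled independently and uniformly from the grid $G$, with data set $X$ as in the context. Then with probability at least $1-1/k$ the following holds: for every path $\pi$ of length at most $\log_2k/4$, either (a) $|F_{u(\pi)}|\le\sqrt k$, or (b) every threshold cut $(i,\xi)$ that separates at least two data points of $X\cap u(\pi)$ damages at least $\varepsilon|F_{u(\pi)}|/2$ centers of $F_{u(\pi)}$.
   Context: $G$ is the set of points of $[0,1]^d$ all of whose coordinates are nonnegative integer multiples of $\varepsilon$; $\mathbf{1}=(1,\dots,1)\in\mathbb{R}^d$. The data set (multiset) $X$ consists, for each $i$, of $k^2\lceil\ln^3k\rceil$ copies of $c^i$ together with the two points $c^i+\varepsilon\mathbf{1}$ and $c^i-\varepsilon\mathbf{1}$. A path $\pi$ is a finite sequence of triples $(i_j,\xi_j,\lambda_j)$ with $i_j\in\{1,\dots,d\}$, $\xi_j\in\mathbb{R}$, $\lambda_j\in\{\pm1\}$; its length is the number of triples; $u(\pi)$ is the set of $y\in\mathbb{R}^d$ such that for each $j$, $y_{i_j}\le\xi_j$ if $\lambda_j=-1$ and $y_{i_j}>\xi_j$ if $\lambda_j=+1$. A center $c^i\in u(\pi)$ is damaged in $u(\pi)$ if $c^i+\varepsilon\mathbf{1}\notin u(\pi)$ or $c^i-\varepsilon\mathbf{1}\notin u(\pi)$; $F_{u(\pi)}$ is the set (indexed by $i$) of centers $c^i\in u(\pi)$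 that are not damaged in $u(\pi)$. A threshold cut $(i,\xi)$ separates two points if exactly one of them satisfies $y_i\le\xi$; it damages a center $c$ if it separates $c$ from $c+\varepsilon\mathbf 1$ or from $c-\varepsilon\mathbf 1$. *)

From HB Require Import structures.
From mathcomp Require Import all_boot all_order all_algebra.
From mathcomp Require Import boolp reals exp.
Set Implicit Arguments. Unset Strict Implicit. Unset Printing Implicit Defensive.
Import Order.TTheory GRing.Theory Num.Theory.
Local Open Scope ring_scope.

Section Defs.
Variable R : realType.

Definition lnc (k : nat) : nat := `|Num.ceil (ln (k%:R : R))|%N.
Definition dimk (k : nat) : nat := (300 * lnc k)%N.
Definition epsk (k : nat) (delta : R) : R := 50 * delta / (lnc k)%:R.
(* number of grid values j*eps (j nat) lying in [0,1]: floor(1/eps) + 1 *)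
Definition gridN (k : nat) (delta : R) : nat :=
  (`|Num.floor (epsk k delta)^-1|%N).+1.

(* a sample of k centers: each coordinate is an index j, standing for j*eps *)
Definition sample (k : nat) (delta : R) :=
  {ffun 'I_k -> {ffun 'I_(dimk k) -> 'I_(gridN k delta)}}.

Definition center k delta (c : sample k delta) (i : 'I_k) : 'I_(dimk k) -> R :=
  fun a => (c i a : nat)%:R * epsk k delta.

Definition dpoint k delta (c : sample k delta) (i : 'I_k) (s : 'I_3)
  : 'I_(dimk k) -> R :=
  fun a => center c i a + ((s : nat)%:R - 1) * epsk k delta.

(* path: triples (coordinate, threshold, lambda) with lambda = true for +1 *)
Definition path_of (d : nat) := seq ('I_d * R * bool).

Definition in_u d (pi : path_of d) (y : 'I_d -> R) : bool :=
  all (fun t => if t.2 then t.1.2 < y t.1.1 else y t.1.1 <= t.1.2) pi.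

Definition damaged_in k delta (c : sample k delta) (pi : path_of (dimk k))
  (i : 'I_k) : bool :=
  ~~ in_u pi (dpoint c i (inord 2)) || ~~ in_u pi (dpoint c i (inord 0)).

Definition Fu k delta (c : sample k delta) (pi : path_of (dimk k)) : {set 'I_k} :=
  [set i | in_u pi (center c i) && ~~ damaged_in c pi i].

Definition separates d (a : 'I_d) (xi : R) (x y : 'I_d -> R) : bool :=
  (x a <= xi) != (y a <= xi).

Definition cut_damages k delta (c : sample k delta) (a : 'I_(dimk k)) (xi : R)
  (i : 'I_k) : bool :=
  separates a xi (center c i) (dpoint c i (inord 2)) ||
  separates a xi (center c i) (dpoint c i (inord 0)).

Definition good_event k delta (c : sample k delta) : Prop :=
  forall pi : path_of (dimk k),
    (size pi)%:R <= ln (k%:R : R) / ln 2 / 4 ->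
    (#|Fu c pi|%:R <= Num.sqrt (k%:R : R)) \/
    (forall (a : 'I_(dimk k)) (xi : R),
       (exists i1 s1 i2 s2,
          [/\ in_u pi (dpoint c i1 s1), in_u pi (dpoint c i2 s2)
            & separates a xi (dpoint c i1 s1) (dpoint c i2 s2)]) ->
       epsk k delta * #|Fu c pi|%:R / 2 <=
         #|[set i in Fu c pi | cut_damages c a xi i]|%:R).

End Defs.

From HB Require Import structures.
From mathcomp Require Import all_boot all_order all_algebra.
From mathcomp Require Import boolp reals sequences exp.
From mathcomp Require Import ring lra zify.
Import Order.TTheory GRing.Theory Num.Theory.
Set Implicit Arguments. Unset Strict Implicit. Unset Printing Implicit Defensive.
Local Open Scope ring_scope.

(* Rounding thresholds to the grid turns a path of length at most
   L = floor(log2 k / 4) into one of at most (2d(n+1)+1)^L discrete boxes, and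
   F_{u(pi)} is exactly the set of centers lying in that box, because an
   undamaged center clears every threshold of pi by a full grid step.  A cut
   (b, xi) that separates two data points of u(pi) passes between the grid values
   floor(xi/eps) and floor(xi/eps)+1, one of which, g, is admissible in the box
   on coordinate b; every center of the box with c_b = g is damaged by the cut.
   A box is a product set, so its slice {c_b = g} has relative density at least
   1/n >= eps/(1+eps), and an exponential-moment bound shows that with
   probability at least 1 - exp(-eps sqrt k / 25) the box does not contain more
   than sqrt k centers of which fewer than eps/2 lie in the slice.  A union bound
   over the boxes, coordinates and grid values finishes the proof, since
   k (2d(n+1)+1)^L d n exp(-eps sqrt k / 25) <= 1 when ln^3 k < delta sqrt k. *)

Lemma card_bigcup_le (I T : finType) (B : I -> {set T}) :
  (#|\bigcup_i B i| <= \sum_i #|B i|)%N.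
Proof.
elim/big_rec2: _ => [|i n U _ le_Un]; first by rewrite cards0.
by rewrite (leq_trans (leq_card_setU _ _)) // leq_add2l.
Qed.

Lemma card_bseq_le (T : finType) (L : nat) : (#|{bseq L of T}| <= #|T|.+1 ^ L)%N.
Proof.
rewrite card_bseq; elim: L => [|L IHL]; first by rewrite big_ord1.
rewrite big_ord_recl expnS mulSn; apply: leq_add; first by rewrite expn_gt0.
under eq_bigr do rewrite expnS.
by rewrite -big_distrr leq_mul.
Qed.

Lemma sumr_boolE (R : pzSemiRingType) (I : finType) (P : pred I) :
  \sum_i (P i)%:R = #|[set i | P i]|%:R :> R.
Proof.
rewrite -sum1dep_card natr_sum [RHS]big_mkcond /=.
by apply: eq_bigr => i _; case: (P i).
Qed.

Lemma card_le_prod_weight (R : realDomainType) (V : finType) (k : nat)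
    (W : V -> R) (t : R) (A : {set {ffun 'I_k -> V}}) :
  (forall v, 0 <= W v) -> \sum_v W v <= #|V|%:R -> 0 <= t ->
  {in A, forall c : {ffun 'I_k -> V}, 1 <= t * \prod_i W (c i)} ->
  #|A|%:R <= t * #|V|%:R ^+ k.
Proof.
move=> W_ge0 sumW t_ge0 A_ge1.
have prodW_ge0 (c : {ffun 'I_k -> V}) : 0 <= \prod_i W (c i) by apply: prodr_ge0.
rewrite -sumr_const.
apply: le_trans (_ : _ <= \sum_(c in A) t * \prod_i W (c i)) _; first exact: ler_sum.
rewrite -mulr_sumr; apply: ler_wpM2l => //.
apply: le_trans (_ : _ <= \sum_(c : {ffun 'I_k -> V}) \prod_i W (c i)) _.
  by rewrite [leRHS](bigID (mem A)) lerDl sumr_ge0.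
rewrite -(bigA_distr_bigA (fun _ => W)) prodr_const card_ord.
by rewrite lerXn2r ?nnegrE ?sumr_ge0.
Qed.

Lemma expR_sub1_le (R : realType) (x : R) : expR x - 1 <= x * expR x.
Proof.
have := expR_ge1Dx (- x); rewrite expRN -div1r ler_pdivlMr ?expR_gt0 //.
by rewrite mulrBl mul1r; lra.
Qed.

Lemma expR_Nhalf_le (R : realType) : expR (- (1 / 2)) <= 2 / 3 :> R.
Proof.
have expR_half_ge := expR_ge1Dx (1 / 2 : R).
by rewrite expRN -[X in X <= _]div1r ler_pdivrMr ?expR_gt0 //; lra.
Qed.

Lemma chernoff_few_hits (R : realType) (V : finType) (k n : nat) (A B : {set V})
    (eps s : R) :
  B \subset A -> (#|A| <= n * #|B|)%N ->
  0 < eps -> eps <= 1 / 8 -> n%:R * eps <= 1 + eps ->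
  #|[set c : {ffun 'I_k -> V} | (s < #|[set i | c i \in A]|%:R) &&
      (#|[set i | c i \in B]|%:R < eps * #|[set i | c i \in A]|%:R / 2)]|%:R
  <= expR (- (eps / 25 * s)) * #|V|%:R ^+ k.
Proof.
move=> /subsetP sBA le_AB eps_gt0 eps_le n_eps.
(* The product weight exp(g #{i | c i \in A} - #{i | c i \in B} / 2) has mean at
   most 1, as B has density at least 1/n in A, and exceeds exp(eps s / 25) on the
   event to be bounded. *)
pose g := 29 / 100 * eps.
pose W v := expR (g * (v \in A)%:R - (v \in B)%:R / 2).
have W_affine v : W v = 1 + (v \in A)%:R * (expR g - 1)
                          - (v \in B)%:R * (expR g * (1 - expR (- (1 / 2)))).
  rewrite /W; have [vB|_] := boolP (v \in B).
    by rewrite sBA //= !mulr1n !mulr1 !mul1r expRD; ring.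
  case: (v \in A) => /=.
    by rewrite !mulr1n mulr1 mulr0n !mul0r subr0 mul1r; ring.
  by rewrite !mulr0n !mul0r subr0 ?mulr0 ?subr0 expR0; ring.
have W_mean : \sum_v W v <= #|V|%:R.
  under eq_bigr do rewrite W_affine.
  rewrite !big_split /= sumrN sumr_const -!mulr_suml !sumr_boolE !cardsE.
  rewrite (_ : #|xpredT| = #|V|) //.
  set a := #|A|%:R; set b := #|B|%:R; set E := expR g.
  have E_ge1 : 1 <= E by rewrite -expR0 ler_expR /g; lra.
  have le_ab : a <= n%:R * b by rewrite -natrM ler_nat.
  have ng_le : n%:R * g <= 1 / 3.
    by rewrite (_ : n%:R * g = 29 / 100 * (n%:R * eps)) /g; [lra | ring].
  suff : a * (E - 1) <= b * (E * (1 - expR (- (1 / 2)))) by lra.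
  apply: le_trans (_ : _ <= n%:R * b * (g * E)) _.
    by apply: ler_pM; rewrite ?subr_ge0 ?expR_sub1_le.
  have bE_ge0 : 0 <= b * E by apply: mulr_ge0; [exact: ler0n | lra].
  rewrite mulrA (_ : n%:R * b * (g * E) = b * E * (n%:R * g)); last by ring.
  by apply: ler_wpM2l => //; have := expR_Nhalf_le R; lra.
apply: (card_le_prod_weight _ W_mean (expR_ge0 _)) => [v | c]; first exact: expR_ge0.
rewrite inE => /andP [s_lt hits_lt].
rewrite -expR_sum -expRD; apply: le_trans (expR_ge1Dx _); rewrite lerDl.
by rewrite sumrB -mulr_sumr -mulr_suml !sumr_boolE /g; nra.
Qed.

Lemma card_le_fiber (I T : finType) (B : {set {ffun I -> T}}) (b : I) (g : T) :
  {in B, forall v : {ffun I -> T}, [ffun a => if a == b then g else v a] \in B} ->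
  (#|B| <= #|[set v in B | v b == g]| * #|T|)%N.
Proof.
move=> B_upd; pose f (v : {ffun I -> T}) := ([ffun a => if a == b then g else v a], v b).
have f_inj : {in B &, injective f}.
  move=> v w _ _ [/ffunP eq_upd eq_b]; apply/ffunP => a.
  by have := eq_upd a; rewrite !ffunE; case: eqP => [->|].
rewrite -(card_in_imset f_inj) -cardsT -cardsX; apply/subset_leq_card/subsetP.
by move=> _ /imsetP [v vB ->]; rewrite !inE B_upd // ffunE !eqxx.
Qed.

Section Boxes.
Variables d n : nat.

Definition step := ('I_d * 'I_n.+1 * bool)%type.

Lemma card_step : #|{: step}| = (d * n.+1 * 2)%N.
Proof. by rewrite !card_prod !card_ord card_bool. Qed.

Definition step_holds (st : step) (x : nat) : bool :=
  if st.2 then (st.1.2 <= x)%N else (x < st.1.2)%N.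

Definition in_box (tau : seq step) (v : {ffun 'I_d -> 'I_n}) : bool :=
  all (fun st => step_holds st (v st.1.1)) tau.

Definition box_meets (tau : seq step) (b : 'I_d) (g : nat) : bool :=
  all (fun st => (st.1.1 == b) ==> step_holds st g) tau.

Lemma card_box_le_slice tau b (g : 'I_n) : box_meets tau b g ->
  (#|[set v | in_box tau v]| <= n * #|[set v | in_box tau v && (v b == g)]|)%N.
Proof.
move=> /allP meets; rewrite mulnC -[n in (_ * n)%N]card_ord.
apply: leq_trans (card_le_fiber (b := b) (g := g) _) _.
  move=> v; rewrite !inE => /allP v_box; apply/allP => st st_tau.
  rewrite ffunE; case: eqP => [st_b|_]; last exact: v_box.
  by have := meets st st_tau; rewrite st_b eqxx.
rewrite leq_mul2r subset_leq_card ?orbT //.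
by apply/subsetP => v; rewrite !inE.
Qed.

End Boxes.

Section Discretization.
Variables (R : realType) (k : nat) (delta : R).
Hypothesis eps_gt0 : 0 < epsk k delta.
Local Notation eps := (epsk k delta).
Local Notation d := (dimk R k).
Local Notation n := (gridN k delta).

Definition grid_floor (xi : R) : int := Num.floor (xi / eps).

Lemma grid_le_floor (j : int) xi : (j%:~R * eps <= xi) = (j <= grid_floor xi).
Proof. by rewrite /grid_floor floor_ge_int ler_pdivlMr. Qed.

Lemma in_u_grid (pi : path_of R d) (y : 'I_d -> R) (j : 'I_d -> int) :
  (forall a, y a = (j a)%:~R * eps) ->
  in_u pi y = all (fun st => if st.2 then grid_floor st.1.2 < j st.1.1
                             else j st.1.1 <= grid_floor st.1.2) pi.
Proof.
move=> yE; apply: eq_all => st; rewrite yE.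
by case: st.2; rewrite ?ltNge grid_le_floor // -ltNge.
Qed.

Lemma center_grid (c : sample k delta) i a :
  center c i a = ((c i a : nat)%:Z)%:~R * eps.
Proof. by []. Qed.

Lemma dpoint_grid (c : sample k delta) i (s : 'I_3) a :
  dpoint c i s a = ((c i a : nat)%:Z + (s : nat)%:Z - 1)%:~R * eps.
Proof. by rewrite /dpoint center_grid !rmorphD rmorphN /=; ring. Qed.

(* Thresholds outside [0, n] act on the indices of 'I_n as 0 or n do. *)
Definition clamp (z : int) : 'I_n.+1 := inord (if z < 0 then 0 else minn `|z| n).

(* An undamaged center passes the step (a, xi, lambda) with a margin of one grid
   unit: its index is at least grid_floor xi + 2 if lambda holds, and below
   grid_floor xi otherwise. *)
Definition disc_step (st : 'I_d * R * bool) : step d n :=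
  (st.1.1, clamp (if st.2 then grid_floor st.1.2 + 2 else grid_floor st.1.2), st.2).

Lemma step_holds_disc st (x : nat) : (x < n)%N ->
  step_holds (disc_step st) x =
    if st.2 then grid_floor st.1.2 + 2 <= x%:Z else x%:Z < grid_floor st.1.2.
Proof.
move=> x_lt; rewrite /step_holds /disc_step /clamp /= inordK; last first.
  by case: ifP => _ //; rewrite ltnS geq_minr.
by case: st.2; case: ifP => z_lt0; apply/idP/idP; lia.
Qed.

Lemma mem_Fu_box (c : sample k delta) pi i :
  (i \in Fu c pi) = in_box (map disc_step pi) (c i).
Proof.
rewrite inE /damaged_in negb_or !negbK /in_box all_map.
rewrite (in_u_grid _ (center_grid c i)).
rewrite !(in_u_grid _ (dpoint_grid c i _)) !inordK // -!all_predI.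
apply: eq_all => st /=; rewrite step_holds_disc //.
by case: st.2; apply/idP/idP => [/and3P [] | ?]; try lia; apply/and3P; split; lia.
Qed.

Lemma cut_damages_near (c : sample k delta) b xi i :
  grid_floor xi <= (c i b : nat)%:Z <= grid_floor xi + 1 -> cut_damages c b xi i.
Proof.
move=> /andP [ge_floor le_floor1].
rewrite /cut_damages /separates center_grid !dpoint_grid !inordK //= !grid_le_floor.
by apply/orP; case: (leP (c i b : nat)%:Z (grid_floor xi)) => ?; [left|right];
  apply/negP => /eqP; lia.
Qed.

Lemma separating_cut_meets_box (c : sample k delta) pi b xi i0 i1 s1 i2 s2 :
  i0 \in Fu c pi -> in_u pi (dpoint c i1 s1) -> in_u pi (dpoint c i2 s2) ->
  separates b xi (dpoint c i1 s1) (dpoint c i2 s2) ->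
  exists g : 'I_n, box_meets (map disc_step pi) b g &&
    (grid_floor xi <= (g : nat)%:Z <= grid_floor xi + 1).
Proof.
(* g is the grid value next to the cut on the side of the undamaged center c0.
   The data point on the other side lies at least one unit beyond g, so g
   satisfies the margin constraints on coordinate b of both c0 and that point. *)
wlog lo_le : i1 s1 i2 s2 / (c i1 b : nat)%:Z + (s1 : nat)%:Z - 1 <= grid_floor xi.
  move=> wlog_lo F0 u1 u2 sep.
  have [lo_le|hi_gt] := leP ((c i1 b : nat)%:Z + (s1 : nat)%:Z - 1) (grid_floor xi).
    exact: wlog_lo sep.
  apply: (wlog_lo i2 s2 i1 s1) => //; last by rewrite /separates eq_sym.
  move: sep; rewrite /separates !dpoint_grid !grid_le_floor.
  by rewrite leNgt hi_gt /=; case: leP.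
rewrite mem_Fu_box /in_box all_map !(in_u_grid _ (dpoint_grid c _ _)).
move=> /allP F0 /allP u1 /allP u2.
rewrite /separates !dpoint_grid !grid_le_floor lo_le /= -ltNge => hi_gt.
set c0 : int := (c i0 b : nat)%:Z.
set g : int := if c0 <= grid_floor xi then grid_floor xi else grid_floor xi + 1.
have c0_lt : (c i0 b < n)%N := ltn_ord _.
have s1_lt : (s1 < 3)%N := ltn_ord _.
have s2_lt : (s2 < 3)%N := ltn_ord _.
have c2_lt : (c i2 b < n)%N := ltn_ord _.
have g_lt : (`|g| < n)%N by rewrite /g; case: ifP; lia.
exists (Ordinal g_lt); apply/andP; split; last by rewrite /= /g; case: ifP; lia.
rewrite /box_meets all_map; apply/allP => st st_pi /=; apply/implyP => /eqP st_b.
have := F0 _ st_pi; rewrite /= st_b step_holds_disc //.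
have := u1 _ st_pi; have := u2 _ st_pi; rewrite /= st_b step_holds_disc //=.
by rewrite -/c0; case: st.2; rewrite /g; case: ifP; lia.
Qed.

Lemma good_event_of_slices (L : nat) (c : sample k delta) :
  (forall m : nat, m%:R <= ln (k%:R : R) / ln 2 / 4 -> (m <= L)%N) ->
  (forall (tau : {bseq L of step d n}) b (g : 'I_n), box_meets tau b g ->
     Num.sqrt (k%:R : R) < #|[set i | in_box tau (c i)]|%:R ->
     eps * #|[set i | in_box tau (c i)]|%:R / 2 <=
       #|[set i | in_box tau (c i) && (c i b == g)]|%:R) ->
  good_event c.
Proof.
move=> L_max slice_ge pi /L_max pi_le.
have tau_size : (size (map disc_step pi) <= L)%N by rewrite size_map.
pose tau : {bseq L of step d n} := Bseq tau_size.
have Fu_box : Fu c pi = [set i | in_box tau (c i)].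
  by apply/setP => i; rewrite mem_Fu_box inE.
have [F_le|F_gt] := leP #|Fu c pi|%:R (Num.sqrt (k%:R : R)); [by left | right].
move=> b xi [i1 [s1 [i2 [s2 [u1 u2 sep]]]]].
have /card_gt0P [i0 i0F] : (0 < #|Fu c pi|)%N.
  by rewrite -(ltr0n R); apply: le_lt_trans F_gt; apply: sqrtr_ge0.
have [g /andP [meets near]] := separating_cut_meets_box i0F u1 u2 sep.
rewrite Fu_box in F_gt *; apply: le_trans (slice_ge tau b g meets F_gt) _.
rewrite ler_nat; apply/subset_leq_card/subsetP => i.
by rewrite !inE => /andP [i_box /eqP ci_g]; rewrite i_box cut_damages_near // ci_g.
Qed.

End Discretization.

Section UnionBound.
Variables (R : realType) (k : nat) (delta : R) (L : nat).
Local Notation eps := (epsk k delta).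
Local Notation d := (dimk R k).
Local Notation n := (gridN k delta).
Hypotheses (eps_gt0 : 0 < eps) (eps_le : eps <= 1 / 8) (n_eps : n%:R * eps <= 1 + eps).
Hypothesis L_max : forall m : nat, m%:R <= ln (k%:R : R) / ln 2 / 4 -> (m <= L)%N.

Lemma card_not_good_le :
  #|~: [set c : sample k delta | `[< good_event c >]]|%:R <=
    ((#|{: step d n}|.+1 ^ L * d * n)%:R : R) *
    (expR (- (eps / 25 * Num.sqrt (k%:R : R))) * #|{ffun 'I_d -> 'I_n}|%:R ^+ k).
Proof.
set E := _ * _ ^+ k.
pose bad (p : {bseq L of step d n} * 'I_d * 'I_n) := [set c : sample k delta |
  let: (tau, b, g) := p in
  [&& box_meets tau b g, Num.sqrt (k%:R : R) < #|[set i | in_box tau (c i)]|%:R &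
      #|[set i | in_box tau (c i) && (c i b == g)]|%:R <
        eps * #|[set i | in_box tau (c i)]|%:R / 2]].
have not_good_sub : ~: [set c | `[< good_event c >]] \subset \bigcup_p bad p.
  apply/subsetP => c; rewrite !inE => /asboolPn not_good; apply/bigcupP.
  apply: contrapT => no_bad; apply: not_good; apply: good_event_of_slices L_max _ => //.
  move=> tau b g meets m_gt; rewrite leNgt; apply/negP => h_lt.
  by apply: no_bad; exists (tau, b, g); rewrite // inE meets m_gt h_lt.
have bad_le p : #|bad p|%:R <= E.
  case: p => [[tau b] g]; have [meets|not_meets] := boolP (box_meets tau b g); last first.
    rewrite (_ : bad _ = set0) ?cards0 ?mulr_ge0 ?expR_ge0 ?exprn_ge0 //.
    by apply/setP => c; rewrite !inE (negbTE not_meets).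
  have slice_sub : [set v | in_box tau v && (v b == g)] \subset [set v | in_box tau v].
    by apply/subsetP => v; rewrite !inE => /andP [].
  apply: le_trans _ (chernoff_few_hits k (Num.sqrt (k%:R : R))
                       slice_sub (card_box_le_slice meets) eps_gt0 eps_le n_eps).
  have memE (P : pred {ffun 'I_d -> 'I_n}) (c : sample k delta) :
    [set i | c i \in [set v | P v]] = [set i | P (c i)] by apply/setP => i; rewrite !inE.
  rewrite ler_nat; apply/subset_leq_card/subsetP => c; rewrite !inE !memE.
  by case/and3P => _ -> ->.
apply: le_trans (_ : _ <= (\sum_p #|bad p|)%:R) _.
  by rewrite ler_nat (leq_trans (subset_leq_card not_good_sub)) ?card_bigcup_le.
rewrite natr_sum; apply: le_trans (ler_sum _ (fun p _ => bad_le p)) _.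
rewrite sumr_const -[E *+ _]mulr_natl.
apply: ler_wpM2r; first by rewrite mulr_ge0 ?expR_ge0 ?exprn_ge0.
by rewrite ler_nat 2!card_prod !card_ord !leq_mul2r card_bseq_le !orbT.
Qed.

End UnionBound.

Lemma ln2_ge_half (R : realType) : 1 / 2 <= ln (2 : R).
Proof.
have := @le_ln1Dx R (- (1 / 2)) ltac:(lra).
by rewrite (_ : 1 + - (1 / 2) = 2^-1) ?lnV ?posrE; lra.
Qed.

Lemma ln_ge_half_log2 (R : realType) (k m : nat) :
  (2 ^ m <= k)%N -> m%:R / 2 <= ln (k%:R : R).
Proof.
move=> le_2m_k; have k_gt0 : (0 < k)%N by apply: leq_trans le_2m_k; rewrite expn_gt0.
have : ln ((2 ^ m)%:R : R) <= ln (k%:R : R).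
  by rewrite ler_ln ?posrE ?ltr0n ?expn_gt0 // ler_nat.
rewrite natrX lnXn // => le_ln; apply: le_trans le_ln; rewrite -mulr_natr.
by have := ln2_ge_half R; have : 0 <= m%:R :> R by []; nra.
Qed.

Definition path_bound (R : realType) (k : nat) : nat :=
  `|Num.floor (ln (k%:R : R) / ln 2 / 4)|%N.

Lemma path_bound_max (R : realType) (k m : nat) :
  m%:R <= ln (k%:R : R) / ln 2 / 4 -> (m <= path_bound R k)%N.
Proof.
move=> m_le; have : m%:Z <= Num.floor (ln (k%:R : R) / ln 2 / 4) by rewrite floor_ge_int.
by rewrite /path_bound; lia.
Qed.

Lemma path_bound_le (R : realType) (k : nat) :
  (0 < k)%N -> (path_bound R k)%:R <= ln (k%:R : R) / 2.
Proof.
move=> k_gt0; have ln_ge0 : 0 <= ln (k%:R : R) by rewrite ln_ge0 // ler1n.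
have ln2_ge := ln2_ge_half R.
have bound_ge0 : 0 <= ln (k%:R : R) / ln 2 / 4 by rewrite !divr_ge0 //; lra.
rewrite natr_absz ger0_norm ?floor_ge0 //; apply: le_trans (floor_le _) _.
by rewrite ler_pdivrMr ?ler_pdivrMr; nra.
Qed.

Section Estimates.
Variables (R : realType) (k : nat) (delta : R).
Hypotheses (k_gt : (500 < k)%N)
  (delta_gt : ln (k%:R : R) ^+ 3 / Num.sqrt (k%:R : R) < delta)
  (delta_lt : delta < 1 / 100).
Local Notation x := (ln (k%:R : R)).
Local Notation sk := (Num.sqrt (k%:R : R)).
Local Notation lc := ((lnc R k)%:R : R).
Local Notation eps := (epsk k delta).
Local Notation nn := ((gridN k delta)%:R : R).

Lemma k_gt0 : 0 < k%:R :> R.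
Proof. by rewrite ltr0n; apply: leq_trans k_gt. Qed.

Lemma sqrt_k_sqr : sk ^+ 2 = k%:R.
Proof. by rewrite sqr_sqrtr // ltW // k_gt0. Qed.

Lemma ln_k_ge4 : 4 <= x.
Proof.
have le_k : (2 ^ 8 <= k)%N by apply: leq_trans (ltnW k_gt).
by have := ln_ge_half_log2 R le_k; lra.
Qed.

Lemma ln_k_cube_lt : x ^+ 3 < delta * sk.
Proof. by rewrite -ltr_pdivrMr // sqrtr_gt0 k_gt0. Qed.

Lemma delta_gt0 : 0 < delta.
Proof.
apply: lt_trans delta_gt; rewrite divr_gt0 ?sqrtr_gt0 ?k_gt0 // exprn_gt0 //.
by have := ln_k_ge4; lra.
Qed.

Lemma sqrt_k_gt : 100 * x ^+ 3 < sk.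
Proof.
have := ler_wpM2r (sqrtr_ge0 (k%:R : R)) (ltW delta_lt).
by have := ln_k_cube_lt; lra.
Qed.

Lemma ln_k_ge6 : 6 <= x.
Proof.
have x_ge4 := ln_k_ge4; have sk_gt := sqrt_k_gt.
have sk_gt6400 : 6400 < sk by nra.
have : ((2 ^ 12)%:R : R) <= k%:R by rewrite -sqrt_k_sqr natrX expr2; nra.
by rewrite ler_nat => /(ln_ge_half_log2 R); lra.
Qed.

Lemma lncE : lc = (Num.ceil x)%:~R.
Proof. by rewrite natr_absz ger0_norm // ceil_ge0; have := ln_k_ge4; lra. Qed.

Lemma lnc_ge : x <= lc.
Proof. by rewrite lncE ceil_ge. Qed.

Lemma lnc_le : lc <= x + 1.
Proof. by have := ceilB1_lt x; rewrite lncE intrD; lra. Qed.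

Lemma epsk_gt0 : 0 < eps.
Proof. by rewrite divr_gt0 ?mulr_gt0 ?delta_gt0 //; have := lnc_ge; have := ln_k_ge4; lra. Qed.

Lemma epsk_le : eps <= 1 / 8.
Proof.
have := lnc_ge; have := ln_k_ge4; have := delta_lt => ? ? ?.
by rewrite /epsk ler_pdivrMr; lra.
Qed.

Lemma gridNE : nn = (Num.floor eps^-1)%:~R + 1.
Proof.
by rewrite /gridN -addn1 natrD natr_absz ger0_norm // floor_ge0 invr_ge0 ltW ?epsk_gt0.
Qed.

Lemma gridN_le : nn <= eps^-1 + 1.
Proof. by rewrite gridNE lerD2r floor_le. Qed.

Lemma gridN_epsk_le : nn * eps <= 1 + eps.
Proof.
have := ler_wpM2r (ltW epsk_gt0) gridN_le.
by rewrite mulrDl mulVf ?gt_eqF ?epsk_gt0 // mul1r.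
Qed.

Lemma ln_k_lt_sqrt : 3600 * x < sk.
Proof.
have x_ge6 := ln_k_ge6; have sk_gt := sqrt_k_gt.
have cube_ge : 36 * x <= x ^+ 3 by nra.
lra.
Qed.

Lemma gridN_lt : nn < sk / 50 + 1.
Proof.
have x_ge6 := ln_k_ge6; have lc_le := lnc_le; have lc_ge := lnc_ge.
have delta_gt0 := delta_gt0; have cube_lt := ln_k_cube_lt.
have : (nn - 1) * eps <= 1 by have := gridN_epsk_le; lra.
rewrite /epsk mulrA ler_pdivrMr; last by lra.
have : lc * 18 <= x ^+ 3 by nra.
nra.
Qed.

Lemma sqrt_k_ge1 : 1 <= sk.
Proof. by have := ln_k_lt_sqrt; have := ln_k_ge6; lra. Qed.

Lemma le_k_of_le_sqrt (y : R) : y <= sk -> y <= k%:R.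
Proof.
by move=> y_le; rewrite -sqrt_k_sqr expr2; have := sqrt_k_ge1; nra.
Qed.

(* Restates the literal 300 of [dimk] as a ring numeral, which lra can read. *)
Lemma dimkE : ((dimk R k)%:R : R) = 300 * lc.
Proof. by rewrite natrM. Qed.

Lemma dimk_le_k : ((dimk R k)%:R : R) <= k%:R.
Proof.
apply: le_k_of_le_sqrt; rewrite dimkE.
by have := ln_k_lt_sqrt; have := lnc_le; have := ln_k_ge6; lra.
Qed.

Lemma gridN_le_k : nn <= k%:R.
Proof.
by apply: le_k_of_le_sqrt; have := gridN_lt; have := ln_k_lt_sqrt; have := ln_k_ge6; lra.
Qed.

Lemma steps_le_k : (((dimk R k * (gridN k delta).+1 * 2).+1)%:R : R) <= k%:R.
Proof.
have x_ge6 := ln_k_ge6; have x_lt := ln_k_lt_sqrt; have lc_le := lnc_le; have n_lt := gridN_lt.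
have lc_ge0 : 0 <= lc by [].
rewrite -sqrt_k_sqr -addn1 natrD natrM natrM dimkE -addn1 natrD expr2.
have : lc * (nn + 1) <= 2 * x * (sk / 50 + 2) by nra.
nra.
Qed.

Lemma path_exponent_le : ((path_bound R k)%:R + 3) * x <= eps / 25 * sk.
Proof.
have k_pos : (0 < k)%N by apply: leq_trans k_gt.
have L_le := path_bound_le R k_pos; have x_ge6 := ln_k_ge6.
have lc_le := lnc_le; have lc_ge := lnc_ge; have cube_lt := ln_k_cube_lt.
apply: le_trans (_ : _ <= x ^+ 2) _; first by nra.
rewrite /epsk (_ : 50 * delta / lc / 25 * sk = (2 * delta * sk) / lc); last by field; lra.
rewrite ler_pdivlMr; nra.
Qed.

Lemma failure_prob_le :
  k%:R * (((dimk R k * (gridN k delta).+1 * 2).+1 ^ path_bound R k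
           * dimk R k * gridN k delta)%:R) * expR (- (eps / 25 * sk)) <= 1.
Proof.
have k_ge0 : 0 <= k%:R :> R by [].
have kE : expR x = k%:R by rewrite lnK // posrE k_gt0.
apply: le_trans (_ : _ <= expR x ^+ (path_bound R k + 3) * expR (- (eps / 25 * sk))) _.
  rewrite ler_wpM2r ?expR_ge0 // kE addn3 !exprS ler_pM ?mulr_ge0 ?exprn_ge0 //.
  rewrite mulrA mulrC mulrA 2!natrM natrX.
  apply: ler_pM; rewrite ?mulr_ge0 ?exprn_ge0 ?gridN_le_k //.
  apply: ler_pM; rewrite ?exprn_ge0 ?dimk_le_k //.
  by rewrite lerXn2r ?nnegrE ?steps_le_k.
by rewrite -expRM_natl -expRD expR_le1 natrD; have := path_exponent_le; lra.
Qed.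

End Estimates.

Theorem lemma9 (R : realType) (k : nat) (delta : R) :
  (500 < k)%N ->
  ln (k%:R : R) ^+ 3 / Num.sqrt (k%:R : R) < delta ->
  delta < 1 / 100 ->
  (1 - 1 / k%:R) * #|[set: sample k delta]|%:R <=
    #|[set c : sample k delta | `[< good_event c >] ]|%:R :> R.
Proof.
move=> k_gt delta_gt delta_lt.
set G := [set c | _]; set T : R := #|[set: sample k delta]|%:R.
have k_gt0 := k_gt0 R k_gt.
have card_sample : #|[set: sample k delta]| =
    (#|{ffun 'I_(dimk R k) -> 'I_(gridN k delta)}| ^ k)%N.
  by rewrite cardsT card_ffun card_ord.
have not_good_le := card_not_good_le (epsk_gt0 k_gt delta_gt) (epsk_le k_gt delta_lt)
  (gridN_epsk_le k_gt delta_gt) (@path_bound_max R k).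
rewrite card_step -natrX -card_sample -/T in not_good_le.
have not_good_small : #|~: G|%:R * k%:R <= T.
  apply: le_trans (ler_wpM2r (ltW k_gt0) not_good_le) _.
  rewrite mulrC !mulrA -[leRHS]mul1r; apply: ler_wpM2r => //.
  exact: failure_prob_le.
have -> : #|G|%:R = T - #|~: G|%:R by rewrite /T cardsT -(cardsC G) natrD addrK.
by move: not_good_small; rewrite -ler_pdivlMr //; lra.
Qed.
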